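(* For $K\in\mathbb R^{m\times L(m+r)}$, the matrix $\hat\Theta_K=P^\top(\Theta+\Pi K)P$ is Schur if and only if $J(K)$ is finite.
   Context: System $\Sigma_s$: $x(t+1)=Ax(t)+Bu(t)$, $y(t)=Cx(t)$, $t\ge0$, $x\in\mathbb R^n,u\in\mathbb R^m,y\in\mathbb R^r$; standing assumptions: $(A,B,C)$ minimal, $A$ Schur. $\mathcal R_L=[A^{L-1}B,\dots,B]$, $\mathcal O_L=[C^\top,\dots,(CA^{L-1})^\top]^\top$, $\mathcal H_L$ the $Lr\times Lm$ block lower-triangular Toeplitz matrix with $(i,j)$ block $H_{i-j}$, $H_0=0$, $H_k=CA^{k-1}B$. Fix $L$ with $\operatorname{rank}\mathcal O_L=n$. IOH $v(t)=[u(t-L)^\top,\dots,u(t-1)^\top,y(t-L)^\top,\dots,y(t-1)^\top]^\top$, $t\ge L$. $\Gamma=[\mathcal R_L-A^L\mathcal O_L^\dagger\mathcal H_L,\ A^L\mathcal O_L^\dagger]$; $\Theta=\mathrm{diag}(S_m,S_r)+EC\Gamma$, with $S_k$ the $Lk\times Lk$ block matrix having $I_k$ in blocks $(i,i+1)$, $i<L$, zeros elsewhere, $E$ having $I_r$ in its last $r$ rows, zeros elsewhere; $\Pi$ has $I_m$ in rows $(L-1)m+1,\dots,Lm$, zeros elsewhere. IOH system: $v(t+1)=\Theta v(t)+\Pi u(t)$, $y=C\Gamma v$, $t\ge L$. $\mathscr P=\mathrm{im}[\Theta^{L(m+r)-1}\Pi,\dots,\Pi]$; $P\in\mathbb R^{L(m+r)\times(Lm+n)}$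 with $\mathrm{im}P=\mathscr P$, $P^\top P=I$. $\Phi\ge0$ with $\mathrm{im}\Phi=\mathscr P$, $Q>0$, $R>0$; $\mathcal N_\Phi$ a Gaussian with second moment about zero $\Phi$. $J(K)=\mathbb E_{v(L)\sim\mathcal N_\Phi}[\sum_{t=L}^\infty y(t)^\top Qy(t)+u(t)^\top Ru(t)]$ with $u(t)=Kv(t)$, $t\ge L$. *)

From HB Require Import structures.
From mathcomp Require Import all_boot all_order all_algebra.
From mathcomp Require Import all_classical all_reals all_analysis.
From mathcomp Require Import complex.

Set Implicit Arguments.
Unset Strict Implicit.
Unset Printing Implicit Defensive.

Import Order.TTheory GRing.Theory Num.Theory.
Local Open Scope classical_set_scope.
Local Open Scope ring_scope.

(* Block-index helpers: an index i : 'I_(L*k) is viewed as the pair    *)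
(* (block i %/ k : 'I_L, offset i %% k : 'I_k), blocks numbered 0..L-1 *)
(* from the top/left.                                                  *)

Lemma blk_idx_lt (L k : nat) (i : 'I_(L * k)) : (i %/ k < L)%N.
Proof.
case: k i => [|k] i; first by case: i => i; rewrite muln0.
by rewrite ltn_divLR // ltn_ord.
Qed.

Lemma blk_off_lt (L k : nat) (i : 'I_(L * k)) : (i %% k < k)%N.
Proof.
case: k i => [|k] i; first by case: i => i; rewrite muln0.
by rewrite ltn_mod.
Qed.

Definition blk_idx (L k : nat) (i : 'I_(L * k)) : 'I_L := Ordinal (blk_idx_lt i).
Definition blk_off (L k : nat) (i : 'I_(L * k)) : 'I_k := Ordinal (blk_off_lt i).

Definition blockmx {R : Type} (L p q : nat) (f : 'I_L -> 'I_L -> 'M[R]_(p, q))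
  : 'M[R]_(L * p, L * q) :=
  \matrix_(i, j) f (blk_idx i) (blk_idx j) (blk_off i) (blk_off j).

Definition blockrow {R : Type} (L p q : nat) (f : 'I_L -> 'M[R]_(p, q))
  : 'M[R]_(p, L * q) :=
  \matrix_(i, j) f (blk_idx j) i (blk_off j).

Definition blockcol {R : Type} (L p q : nat) (f : 'I_L -> 'M[R]_(p, q))
  : 'M[R]_(L * p, q) :=
  \matrix_(i, j) f (blk_idx i) (blk_off i) j.

Section Defs.
Variable R : realType.

Definition schur (k : nat) (M : 'M[R]_k) : Prop :=
  forall z : R[i], root (char_poly (map_mx (fun x : R => (x%:C)%C) M)) z ->
    `|z| < 1.

Definition psd (k : nat) (M : 'M[R]_k) : Prop :=
  M^T = M /\ forall x : 'cV[R]_k, 0 <= (x^T *m M *m x) 0 0.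

Definition pd (k : nat) (M : 'M[R]_k) : Prop :=
  M^T = M /\ forall x : 'cV[R]_k, x != 0 -> 0 < (x^T *m M *m x) 0 0.

(* column space (image) equality: im M = im N *)
Definition same_image (p q1 q2 : nat) (M : 'M[R]_(p, q1)) (N : 'M[R]_(p, q2))
  : Prop := (M^T == N^T)%MS.

(* Moore-Penrose pseudo-inverse of a matrix with full column rank *)
Definition pinv_fcr (p q : nat) (M : 'M[R]_(p, q)) : 'M[R]_(q, p) :=
  invmx (M^T *m M) *m M^T.

Variables (n m r : nat).

Definition ctrb_mx (A : 'M[R]_n) (B : 'M[R]_(n, m)) : 'M[R]_(n, n * m) :=
  blockrow (fun j : 'I_n => A ^+ j *m B).
Definition obsv_mx (A : 'M[R]_n) (C : 'M[R]_(r, n)) : 'M[R]_(n * r, n) :=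
  blockcol (fun i : 'I_n => C *m A ^+ i).

Definition minimal (A : 'M[R]_n) (B : 'M[R]_(n, m)) (C : 'M[R]_(r, n)) : Prop :=
  \rank (ctrb_mx A B) = n /\ \rank (obsv_mx A C) = n.

Variable L : nat.

Definition RL (A : 'M[R]_n) (B : 'M[R]_(n, m)) : 'M[R]_(n, L * m) :=
  blockrow (fun j : 'I_L => A ^+ (L.-1 - j) *m B).
Definition OL (A : 'M[R]_n) (C : 'M[R]_(r, n)) : 'M[R]_(L * r, n) :=
  blockcol (fun i : 'I_L => C *m A ^+ i).
Definition HL (A : 'M[R]_n) (B : 'M[R]_(n, m)) (C : 'M[R]_(r, n))
  : 'M[R]_(L * r, L * m) :=
  blockmx (fun i j : 'I_L => if (j < i)%N then C *m A ^+ (i - j).-1 *m B else 0).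

Definition Gamma (A : 'M[R]_n) (B : 'M[R]_(n, m)) (C : 'M[R]_(r, n))
  : 'M[R]_(n, L * m + L * r) :=
  row_mx (RL A B - A ^+ L *m pinv_fcr (OL A C) *m HL A B C)
         (A ^+ L *m pinv_fcr (OL A C)).

Definition Sk (k : nat) : 'M[R]_(L * k) :=
  blockmx (fun i j : 'I_L => if (j == i.+1 :> nat) then 1%:M else 0).

Definition Emx : 'M[R]_(L * m + L * r, r) :=
  col_mx 0 (blockcol (fun i : 'I_L => if (i == L.-1 :> nat) then 1%:M else 0)).

Definition Pimx : 'M[R]_(L * m + L * r, m) :=
  col_mx (blockcol (fun i : 'I_L => if (i == L.-1 :> nat) then 1%:M else 0)) 0.

Definition Theta (A : 'M[R]_n) (B : 'M[R]_(n, m)) (C : 'M[R]_(r, n))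
  : 'M[R]_(L * m + L * r) :=
  block_mx (Sk m) 0 0 (Sk r) + Emx *m C *m Gamma A B C.

(* [Theta^{L(m+r)-1} Pi, ..., Pi] ; its image is the subspace 𝒫 *)
Definition ctrb_ioh (A : 'M[R]_n) (B : 'M[R]_(n, m)) (C : 'M[R]_(r, n))
  : 'M[R]_(L * m + L * r, (L * m + L * r) * m) :=
  blockrow
    (fun j : 'I_(L * m + L * r) => Theta A B C ^+ ((L * m + L * r).-1 - j) *m Pimx).

Definition Acl (A : 'M[R]_n) (B : 'M[R]_(n, m)) (C : 'M[R]_(r, n))
  (K : 'M[R]_(m, L * m + L * r)) : 'M[R]_(L * m + L * r) :=
  Theta A B C + Pimx *m K.

Definition stage_cost (A : 'M[R]_n) (B : 'M[R]_(n, m)) (C : 'M[R]_(r, n))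
  (Q : 'M[R]_r) (Rw : 'M[R]_m) (K : 'M[R]_(m, L * m + L * r))
  (v : 'cV[R]_(L * m + L * r)) : R :=
  let y := C *m Gamma A B C *m v in
  let u := K *m v in
  (y^T *m Q *m y + u^T *m Rw *m u) 0 0.

(* J(K) = E[ sum_{t >= L} y(t)^T Q y(t) + u(t)^T R u(t) ], where
   v(L) = v0 and v(L+k) = (Theta + Pi K)^k v(L). *)
Definition Jcost (d : measure_display) (T : measurableType d)
  (Pr : probability T R) (v0 : T -> 'cV[R]_(L * m + L * r))
  (A : 'M[R]_n) (B : 'M[R]_(n, m)) (C : 'M[R]_(r, n))
  (Q : 'M[R]_r) (Rw : 'M[R]_m) (K : 'M[R]_(m, L * m + L * r)) : \bar R :=
  (\int[Pr]_x (\sum_(0 <= k <oo)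
      (stage_cost A B C Q Rw K (Acl A B C K ^+ k *m v0 x))%:E))%E.

End Defs.

(* A Gaussian random vector v0 on (T, Pr) with second moment (about zero)
   Phi: components are measurable, every linear functional w v0 is
   normally distributed (possibly degenerate, i.e. a Dirac mass), and
   E[v0 v0^T] = Phi. *)
Definition gaussian_second_moment {R : realType} (N : nat)
  (d : measure_display) (T : measurableType d) (Pr : probability T R)
  (v0 : T -> 'cV[R]_N) (Phi : 'M[R]_N) : Prop :=
  [/\ (forall i : 'I_N, measurable_fun setT (fun x => v0 x i 0)),
      (forall w : 'rV[R]_N, exists (mu s : R),
         forall A : set R, measurable A ->
           Pr ((fun x => (w *m v0 x) 0 0) @^-1` A) =
           (if s == 0 then \d_mu A else normal_prob mu s A)) &
      (forall i j : 'I_N,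
         Pr.-integrable setT (fun x => (v0 x i 0 * v0 x j 0)%:E) /\
         (\int[Pr]_x (v0 x i 0 * v0 x j 0)%:E = (Phi i j)%:E)%E)].

(* The closed-loop IOH state v(t) = (Theta + Pi K)^(t-L) v(L) stays in im P: that is
   the controllable subspace of (Theta, Pi), which is invariant under any feedback,
   and Theta_K = P^T (Theta + Pi K) P is the closed loop restricted to it. Since v(L)
   has second moment Phi with im Phi = im P, J(K) = sum_k tr(N_k Phi) with
   N_k = ((Theta + Pi K)^k)^T W (Theta + Pi K)^k, W the stage weight.
   If Theta_K is Schur, the entries of its powers are absolutely summable, hence so
   is the series. Conversely, an eigenvalue z of Theta_K with |z| >= 1 gives real
   vectors a, b in im P whose stage costs never decay; they are not both invisible
   to W because the closed loop is a nilpotent shift plus a term that only sees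
   y = C Gamma v and u = K v. Cauchy-Schwarz against the second moment then bounds
   every tr(N_k Phi) below by a positive constant, so J(K) = +oo. *)

From HB Require Import structures.
From mathcomp Require Import all_boot all_order all_algebra.
From mathcomp Require Import all_classical all_reals all_analysis.
From mathcomp Require Import complex.
From mathcomp Require Import zify ring lra.

Set Implicit Arguments.
Unset Strict Implicit.
Unset Printing Implicit Defensive.
Import Order.TTheory GRing.Theory Num.Theory.
Local Open Scope ring_scope.

Section AbsSummable.
Variable F : numFieldType.
Implicit Types (u v : nat -> F) (c : F).

Definition abs_summable u := exists M : F, forall N, \sum_(k < N) `|u k| <= M.

Lemma abs_summable_bounded u : abs_summable u -> exists B : F, forall k, `|u k| <= B.
Proof.
move=> [M sumM]; exists M => k; apply: le_trans (sumM k.+1).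
by rewrite big_ord_recr /= lerDr sumr_ge0.
Qed.

Lemma eq_abs_summable u v : u =1 v -> abs_summable u -> abs_summable v.
Proof. by move=> uv [M sumM]; exists M => N; under eq_bigr do rewrite -uv. Qed.

Lemma abs_summable0 : abs_summable (fun=> 0).
Proof. by exists 0 => N; rewrite big1 // => i _; rewrite normr0. Qed.

Lemma abs_summableD u v :
  abs_summable u -> abs_summable v -> abs_summable (fun k => u k + v k).
Proof.
move=> [M sumM] [M' sumM']; exists (M + M') => N.
apply: le_trans (lerD (sumM N) (sumM' N)); rewrite -big_split /=.
by apply: ler_sum => i _; apply: ler_normD.
Qed.

Lemma abs_summableZ c u : abs_summable u -> abs_summable (fun k => c * u k).
Proof.
move=> [M sumM]; exists (`|c| * M) => N.
by under eq_bigr do rewrite normrM; rewrite -mulr_sumr ler_wpM2l.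
Qed.

Lemma abs_summableM u v :
  abs_summable u -> abs_summable v -> abs_summable (fun k => u k * v k).
Proof.
move=> /abs_summable_bounded [B uB] [M sumM]; exists (B * M) => N.
have B_ge0 : 0 <= B by apply: le_trans (uB 0%N).
apply: le_trans (_ : \sum_(k < N) B * `|v k| <= _); last first.
  by rewrite -mulr_sumr ler_wpM2l.
by apply: ler_sum => i _; rewrite normrM ler_wpM2r.
Qed.

Lemma abs_summable_sum (I : Type) (s : seq I) (u : I -> nat -> F) :
  (forall i, abs_summable (u i)) -> abs_summable (fun k => \sum_(i <- s) u i k).
Proof.
move=> sum_u; elim: s => [|i s IHs].
  by apply: eq_abs_summable abs_summable0 => k; rewrite big_nil.
by apply: eq_abs_summable (abs_summableD (sum_u i) IHs) => k; rewrite big_cons.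
Qed.

Lemma abs_summable_rec (a b : nat -> F) (z : F) : `|z| < 1 -> abs_summable b ->
  (forall k, a k.+1 = z * a k + b k) -> abs_summable a.
Proof.
move=> z_lt1 [B sumB] a_rec; pose S N := \sum_(k < N) `|a k|.
have S_mono N : S N <= S N.+1 by rewrite /S big_ord_recr /= lerDl.
have S_rec N : S N.+1 <= `|a 0%N| + (`|z| * S N.+1 + B).
  rewrite [in X in X <= _]/S big_ord_recl lerD2l.
  apply: le_trans (_ : \sum_(k < N) (`|z| * `|a k| + `|b k|) <= _).
    by apply: ler_sum => k _; rewrite a_rec -normrM ler_normD.
  by rewrite big_split -mulr_sumr lerD // ler_wpM2l //; apply: S_mono.
exists ((`|a 0%N| + B) / (1 - `|z|)) => N; apply: le_trans (S_mono N) _.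
rewrite ler_pdivlMr ?subr_gt0 // mulrBr mulr1 lerBlDr.
by apply: le_trans (S_rec N) _; rewrite addrA addrAC mulrC.
Qed.

End AbsSummable.

Section MxAbsSummable.
Variable F : numFieldType.

Definition mx_abs_summable p q (U : nat -> 'M[F]_(p, q)) :=
  forall i j, abs_summable (fun k => U k i j).

Lemma mx_abs_summable_tr p q (U : nat -> 'M[F]_(p, q)) :
  mx_abs_summable U -> mx_abs_summable (fun k => (U k)^T).
Proof. by move=> sumU i j; apply: eq_abs_summable (sumU j i) => k; rewrite mxE. Qed.

Lemma mx_abs_summableMl p q s (P : 'M[F]_(p, q)) (U : nat -> 'M[F]_(q, s)) :
  mx_abs_summable U -> mx_abs_summable (fun k => P *m U k).
Proof.
move=> sumU i j; apply: eq_abs_summable (abs_summable_sum _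
  (fun c => abs_summableZ (P i c) (sumU c j))) => k.
by rewrite mxE.
Qed.

Lemma mx_abs_summableMr p q s (U : nat -> 'M[F]_(p, q)) (P : 'M[F]_(q, s)) :
  mx_abs_summable U -> mx_abs_summable (fun k => U k *m P).
Proof.
move=> sumU i j; apply: eq_abs_summable (abs_summable_sum _
  (fun c => abs_summableZ (P c j) (sumU i c))) => k.
by rewrite mxE; apply: eq_bigr => c _; rewrite mulrC.
Qed.

Lemma mx_abs_summableM p q s (U : nat -> 'M[F]_(p, q)) (V : nat -> 'M[F]_(q, s)) :
  mx_abs_summable U -> mx_abs_summable V -> mx_abs_summable (fun k => U k *m V k).
Proof.
move=> sumU sumV i j; apply: eq_abs_summable (abs_summable_sum _
  (fun c => abs_summableM (sumU i c) (sumV c j))) => k.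
by rewrite mxE.
Qed.

End MxAbsSummable.

Section MxPowAbsSummable.
Variable F : numClosedFieldType.

(* With Y := (M - z) X one has M^(k+1) X = z M^k X + M^k Y, so abs_summable_rec
   peels off the roots of the annihilator one at a time. *)
Lemma mxpow_abs_summable_annihilated n (M : 'M[F]_n.+1) (s : seq F) :
  (forall z, z \in s -> `|z| < 1) -> forall p (X : 'M[F]_(n.+1, p)),
  horner_mx M (\prod_(z <- s) ('X - z%:P)) *m X = 0 ->
  mx_abs_summable (fun k => M ^+ k *m X).
Proof.
elim: s => [|z s IHs] s_lt1 p X.
  rewrite big_nil rmorph1 mul1mx => -> i j.
  by apply: eq_abs_summable (@abs_summable0 F) => k; rewrite mulmx0 mxE.
rewrite big_cons mulrC rmorphM /= -mulmxA => annX i j.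
set Y := horner_mx M ('X - z%:P) *m X.
have sumY := IHs (fun w ws => s_lt1 w (mem_behead (s := z :: s) ws)) _ _ annX i j.
apply: (abs_summable_rec (s_lt1 z (mem_head z s)) sumY) => k.
have -> : M ^+ k.+1 *m X = z *: (M ^+ k *m X) + M ^+ k *m Y.
  rewrite /Y rmorphB /= horner_mx_X horner_mx_C mulmxBl mulmxBr mul_scalar_mx.
  by rewrite -scalemxAr addrC subrK exprSr mulmxA.
by rewrite !mxE.
Qed.

Lemma mxpow_abs_summable n (M : 'M[F]_n) :
  (forall z, root (char_poly M) z -> `|z| < 1) -> mx_abs_summable (fun k => M ^+ k).
Proof.
case: n M => [|n] M M_lt1 i j; first by case: i.
have [s char_s] := closed_field_poly_normal (char_poly M).
rewrite (monicP (char_poly_monic M)) scale1r in char_s.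
have s_lt1 z : z \in s -> `|z| < 1 by rewrite -root_prod_XsubC -char_s => /M_lt1.
have ann1 : horner_mx M (\prod_(z <- s) ('X - z%:P)) *m 1%:M = 0.
  by rewrite -char_s Cayley_Hamilton mul0mx.
apply: eq_abs_summable (mxpow_abs_summable_annihilated s_lt1 ann1 i j) => k.
by rewrite mulmx1.
Qed.

End MxPowAbsSummable.

Section SchurAbsSummable.
Variable R : realType.
Local Notation toC := (real_complex R).

Lemma map_mxX (S : comNzRingType) (f : {rmorphism R -> S}) n (M : 'M[R]_n) k :
  map_mx f (M ^+ k) = map_mx f M ^+ k.
Proof.
elim: k => [|k IHk]; last by rewrite !exprS -IHk map_mxM.
by apply/matrixP => i j; rewrite !expr0 !mxE rmorph_nat.
Qed.

Lemma normc_real (x : R) : `|toC x| = toC `|x|.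
Proof. by rewrite normc_def /= expr0n /= addr0 sqrtr_sqr. Qed.

Lemma abs_summable_real (u : nat -> R) :
  abs_summable (fun k => toC (u k)) -> abs_summable u.
Proof.
move=> [M sumM]; exists (complex.Re M) => N; have := sumM N.
under eq_bigr do rewrite normc_real.
by rewrite -(rmorph_sum toC) lecE => /andP[].
Qed.

Lemma schur_mxpow_abs_summable n (M : 'M[R]_n) :
  schur M -> mx_abs_summable (fun k => M ^+ k).
Proof.
move=> M_schur i j; apply: abs_summable_real.
apply: eq_abs_summable (mxpow_abs_summable M_schur i j) => k.
by rewrite -map_mxX mxE.
Qed.

End SchurAbsSummable.

Lemma blk_pair_lt (L k : nat) (j : 'I_L) (a : 'I_k) : (j * k + a < L * k)%N.
Proof.
apply: (@leq_trans (j.+1 * k)); first by rewrite mulSn addnC ltn_add2r.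
by rewrite leq_mul2r ltn_ord orbT.
Qed.

Definition blk_pair (L k : nat) (j : 'I_L) (a : 'I_k) : 'I_(L * k) :=
  Ordinal (blk_pair_lt j a).

Lemma blk_idx_pair (L k : nat) (j : 'I_L) (a : 'I_k) : blk_idx (blk_pair j a) = j.
Proof. by apply: val_inj; rewrite /= divnMDl ?divn_small ?addn0 // (leq_ltn_trans _ (ltn_ord a)). Qed.

Lemma blk_off_pair (L k : nat) (j : 'I_L) (a : 'I_k) : blk_off (blk_pair j a) = a.
Proof. by apply: val_inj; rewrite /= modnMDl modn_small. Qed.

Lemma tr_blockrow (T : Type) L p q (f : 'I_L -> 'M[T]_(p, q)) :
  (blockrow f)^T = blockcol (fun j => (f j)^T).
Proof. by apply/matrixP => i j; rewrite !mxE. Qed.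

Lemma blockcol_mulmx (T : pzRingType) L p q s (G : 'I_L -> 'M[T]_(p, q))
  (M : 'M[T]_(q, s)) : blockcol G *m M = blockcol (fun j => G j *m M).
Proof. by apply/matrixP => i j; rewrite !mxE; apply: eq_bigr => k _; rewrite mxE. Qed.

Lemma row_blockcol (T : Type) L p q (G : 'I_L -> 'M[T]_(p, q)) b :
  row b (blockcol G) = row (blk_off b) (G (blk_idx b)).
Proof. by apply/rowP => c; rewrite !mxE. Qed.

Lemma blockcol_subP (F : fieldType) L p q s (G : 'I_L -> 'M[F]_(p, q))
  (V : 'M[F]_(s, q)) : reflect (forall j, (G j <= V)%MS) (blockcol G <= V)%MS.
Proof.
apply: (iffP idP) => [GV j | GV].
  apply/row_subP => a; have := row_blockcol G (blk_pair j a).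
  by rewrite blk_idx_pair blk_off_pair => <-; rewrite (submx_trans (row_sub _ _)).
by apply/row_subP => b; rewrite row_blockcol (submx_trans (row_sub _ _)).
Qed.

Lemma Cayley_Hamilton_exp (T : comNzRingType) n (M : 'M[T]_n.+1) :
  M ^+ n.+1 = - \sum_(i < n.+1) (char_poly M)`_i *: M ^+ i.
Proof.
have lead1 : (char_poly M)`_n.+1 = 1.
  by have := char_poly_monic M; rewrite monicE lead_coefE size_char_poly => /eqP.
have := Cayley_Hamilton M.
rewrite -{1}(coefK (char_poly M)) poly_def size_char_poly rmorph_sum big_ord_recr /=.
rewrite horner_mxZ rmorphXn /= horner_mx_X lead1 scale1r => /eqP.
rewrite addrC addr_eq0 => /eqP ->; congr (- _).
by apply: eq_bigr => i _; rewrite horner_mxZ rmorphXn /= horner_mx_X.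
Qed.

Section ControllableSubspace.
Variables (F : fieldType) (N p : nat) (Th : 'M[F]_N) (Pi : 'M[F]_(N, p)).
Local Notation ctrb := (blockrow (fun j : 'I_N => Th ^+ (N.-1 - j) *m Pi)).

(* Cayley-Hamilton writes Th^e Pi, e >= N, as a combination of lower powers. *)
Lemma ctrb_exp_sub e : ((Th ^+ e *m Pi)^T <= ctrb^T)%MS.
Proof.
rewrite tr_blockrow; case: N Th Pi => [|n] Th' Pi'.
  by rewrite [(_ *m _)^T]thinmx0 sub0mx.
set G := fun j : 'I_n.+1 => _.
elim/ltn_ind: e => e IHe; have [le_en | lt_ne] := leqP e n.
  have lt_idx : (n - e < n.+1)%N by rewrite ltnS leq_subr.
  have /blockcol_subP/(_ (Ordinal lt_idx)) := submx_refl (blockcol G).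
  by rewrite /G /= subKn.
have -> : Th' ^+ e *m Pi' = \sum_(i < n.+1)
    (- (char_poly Th')`_i) *: (Th' ^+ (e - n.+1 + i) *m Pi').
  rewrite -(subnK lt_ne) exprD Cayley_Hamilton_exp mulrN mulr_sumr mulNmx.
  rewrite mulmx_suml -sumrN; apply: eq_bigr => i _.
  by rewrite scaleNr -scalerAr -exprD scalemxAl addnK.
rewrite raddf_sum /=; apply: summx_sub => i _; rewrite linearZ /= scalemx_sub //.
by apply: IHe; have := ltn_ord i; lia.
Qed.

Lemma ctrb_feedback_invariant q (K : 'M[F]_(p, N)) (P : 'M[F]_(N, q)) :
  (P^T == ctrb^T)%MS -> exists D : 'M[F]_q, (Th + Pi *m K) *m P = P *m D.
Proof.
move=> /andP[PX XP].
have X_inv : (ctrb^T *m (Th + Pi *m K)^T <= ctrb^T)%MS.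
  rewrite raddfD /= mulmxDr addmx_sub //.
    rewrite tr_blockrow blockcol_mulmx; apply/blockcol_subP => j.
    rewrite -trmx_mul mulmxA -tr_blockrow.
    have -> : Th *m Th ^+ (N.-1 - j) = Th ^+ (N.-1 - j).+1 by rewrite exprS.
    exact: ctrb_exp_sub.
  rewrite trmx_mul mulmxA (submx_trans (submxMl _ _)) //.
  by have := ctrb_exp_sub 0; rewrite expr0 mul1mx.
have P_inv : (P^T *m (Th + Pi *m K)^T <= P^T)%MS.
  by rewrite (submx_trans (submxMr _ PX)) // (submx_trans X_inv).
have [D eqD] := submxP P_inv; exists D^T.
by apply: trmx_inj; rewrite trmx_mul eqD trmx_mul trmxK.
Qed.

End ControllableSubspace.

Section StrictlyUpper.
Variable T : pzRingType.

Definition strictly_upper n (M : 'M[T]_n) := forall i j : 'I_n, M i j != 0 -> (i < j)%N.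

Lemma strictly_upper_exp n (M : 'M[T]_n) : strictly_upper M ->
  forall k (i j : 'I_n), (M ^+ k) i j != 0 -> (i + k <= j)%N.
Proof.
move=> M_up; elim=> [|k IHk] i j.
  by rewrite expr0 mxE addn0; case: (eqVneq i j) => [->|_] //; rewrite mulr0n eqxx.
rewrite exprSr mxE => /eqP sum_neq0.
have [l Ml_neq0] : exists l, (M ^+ k) i l * M l j != 0.
  apply/existsP; apply: contra_notT sum_neq0 => /existsPn Mij0.
  by rewrite big1 // => l _; apply/eqP/negbNE/Mij0.
have /IHk : (M ^+ k) i l != 0 by apply: contraNneq Ml_neq0 => ->; rewrite mul0r.
have /M_up : M l j != 0 by apply: contraNneq Ml_neq0 => ->; rewrite mulr0.
lia.
Qed.

Lemma strictly_upper_nilpotent n (M : 'M[T]_n) : strictly_upper M -> M ^+ n = 0.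
Proof.
move=> M_up; apply/matrixP => i j; rewrite mxE; apply/eqP/negP => /negP.
by move/(strictly_upper_exp M_up); have := ltn_ord j; lia.
Qed.

Lemma strictly_upper_block_diag p q (A : 'M[T]_p) (D : 'M[T]_q) :
  strictly_upper A -> strictly_upper D -> strictly_upper (block_mx A 0 0 D).
Proof.
move=> A_up D_up i j; rewrite -(splitK i) -(splitK j).
case: (fintype.split i) => i'; case: (fintype.split j) => j' /=;
  rewrite ?block_mxEul ?block_mxEur ?block_mxEdl ?block_mxEdr ?mxE ?eqxx //.
- by move/A_up.
- by move/D_up; rewrite ltn_add2l.
Qed.

End StrictlyUpper.

Lemma strictly_upper_Sk (R : realType) L k : strictly_upper (Sk R L k).
Proof.
move=> i j; rewrite /Sk /blockmx mxE; case: ifP => [/eqP /= idx_j|]; last by rewrite mxE eqxx.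
rewrite mxE; have [off_ij _ | _] := eqVneq (blk_off i) (blk_off j); last by rewrite eqxx.
move/(congr1 val): off_ij => /= off_ij.
have := divn_eq i k; have := divn_eq j k; have := blk_off_lt i.
rewrite idx_j off_ij mulSn; lia.
Qed.

Section QuadraticForms.
Variable T : comPzRingType.
Implicit Types n : nat.

Definition bl n (M : 'M[T]_n) (x y : 'cV[T]_n) : T := (x^T *m M *m y) 0 0.
Definition qf n (M : 'M[T]_n) (x : 'cV[T]_n) : T := bl M x x.
Definition mxdot n (M X : 'M[T]_n) : T := \sum_j \sum_i M i j * X i j.

Lemma blDl n (M : 'M[T]_n) x y z : bl M (x + y) z = bl M x z + bl M y z.
Proof. by rewrite /bl raddfD /= !mulmxDl mxE. Qed.

Lemma blDr n (M : 'M[T]_n) x y z : bl M z (x + y) = bl M z x + bl M z y.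
Proof. by rewrite /bl !mulmxDr mxE. Qed.

Lemma blZl n (M : 'M[T]_n) a x z : bl M (a *: x) z = a * bl M x z.
Proof. by rewrite /bl linearZ /= -!scalemxAl mxE. Qed.

Lemma blZr n (M : 'M[T]_n) a x z : bl M z (a *: x) = a * bl M z x.
Proof. by rewrite /bl -!scalemxAr mxE. Qed.

Lemma blC n (M : 'M[T]_n) x y : M^T = M -> bl M x y = bl M y x.
Proof.
move=> M_sym; rewrite /bl -[in LHS](trmxK (x^T *m M *m y)) [in LHS]mxE.
by rewrite !trmx_mul trmxK M_sym mulmxA.
Qed.

Lemma qf_lin_comb n (M : 'M[T]_n) a b x y : M^T = M ->
  qf M (a *: x + b *: y) = a ^+ 2 * qf M x + 2 * a * b * bl M x y + b ^+ 2 * qf M y.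
Proof. by move=> M_sym; rewrite /qf !blDl !blDr !blZl !blZr (blC x y M_sym); ring. Qed.

Lemma qf_rotate n (M : 'M[T]_n) a b x y : M^T = M ->
  qf M (a *: x - b *: y) + qf M (b *: x + a *: y) = (a ^+ 2 + b ^+ 2) * (qf M x + qf M y).
Proof. by move=> M_sym; rewrite -scaleNr !qf_lin_comb //; ring. Qed.

Lemma qfDl n (M1 M2 : 'M[T]_n) x : qf (M1 + M2) x = qf M1 x + qf M2 x.
Proof. by rewrite /qf /bl mulmxDr mulmxDl mxE. Qed.

Lemma qfBl n (M1 M2 : 'M[T]_n) x : qf (M1 - M2) x = qf M1 x - qf M2 x.
Proof. by rewrite /qf /bl mulmxBr mulmxBl !mxE. Qed.

Lemma qfZl n c (M : 'M[T]_n) x : qf (c *: M) x = c * qf M x.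
Proof. by rewrite /qf /bl -scalemxAr -scalemxAl !mxE. Qed.

Lemma qf_mulmx n p (X : 'M[T]_(p, n)) (M : 'M[T]_p) x :
  qf (X^T *m M *m X) x = qf M (X *m x).
Proof. by rewrite /qf /bl trmx_mul !mulmxA. Qed.

Lemma qf_outer n (l x : 'cV[T]_n) : qf (l *m l^T) x = ((l^T *m x) 0 0) ^+ 2.
Proof.
rewrite /qf /bl mulmxA -(mulmxA _ l^T x).
have -> : x^T *m l = (l^T *m x)^T by rewrite trmx_mul trmxK.
by rewrite mxE big_ord1 !mxE expr2.
Qed.

Lemma qf_expand n (M : 'M[T]_n) x : qf M x = \sum_j \sum_i M i j * (x i 0 * x j 0).
Proof.
rewrite /qf /bl !mxE; apply: eq_bigr => j _; rewrite !mxE mulr_suml.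
by apply: eq_bigr => i _; rewrite !mxE; ring.
Qed.

Lemma mxdot_trace n (M X : 'M[T]_n) : mxdot M X = \tr (M^T *m X).
Proof.
rewrite /mxdot /mxtrace; apply: eq_bigr => j _; rewrite mxE.
by apply: eq_bigr => i _; rewrite mxE.
Qed.

Lemma mxdot_congr n q (M : 'M[T]_n) (P : 'M[T]_(n, q)) (Z : 'M[T]_q) :
  mxdot M (P *m Z *m P^T) = mxdot (P^T *m M *m P) Z.
Proof. by rewrite !mxdot_trace mulmxA mxtrace_mulC !mulmxA !trmx_mul trmxK !mulmxA. Qed.

Lemma mxdotBl n (M1 M2 X : 'M[T]_n) : mxdot (M1 - M2) X = mxdot M1 X - mxdot M2 X.
Proof.
rewrite /mxdot -sumrB; apply: eq_bigr => j _; rewrite -sumrB.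
by apply: eq_bigr => i _; rewrite !mxE mulrBl.
Qed.

Lemma mxdotZl n c (M X : 'M[T]_n) : mxdot (c *: M) X = c * mxdot M X.
Proof.
rewrite /mxdot mulr_sumr; apply: eq_bigr => j _; rewrite mulr_sumr.
by apply: eq_bigr => i _; rewrite !mxE mulrA.
Qed.

Lemma mxdot_outer n (l : 'cV[T]_n) (X : 'M[T]_n) : mxdot (l *m l^T) X = qf X l.
Proof.
rewrite qf_expand /mxdot; apply: eq_bigr => j _; apply: eq_bigr => i _.
by rewrite !mxE big_ord1 !mxE mulrC.
Qed.

End QuadraticForms.

Lemma abs_summable_mxdot (F : numFieldType) n (U : nat -> 'M[F]_n) (Z : 'M[F]_n) :
  mx_abs_summable U -> abs_summable (fun k => mxdot (U k) Z).
Proof.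
move=> sumU; apply: abs_summable_sum => j; apply: abs_summable_sum => i.
by apply: eq_abs_summable (abs_summableZ (Z i j) (sumU i j)) => k; rewrite mulrC.
Qed.

Lemma bl_CauchySchwarz (F : realFieldType) n (M : 'M[F]_n) x y :
  M^T = M -> (forall z, 0 <= qf M z) -> bl M x y ^+ 2 <= qf M x * qf M y.
Proof.
move=> M_sym M_ge0; have qx_ge0 := M_ge0 x.
have qf_comb a b : 0 <= a ^+ 2 * qf M x + 2 * a * b * bl M x y + b ^+ 2 * qf M y.
  by rewrite -qf_lin_comb.
have [qy0 | qy_neq0] := eqVneq (qf M y) 0.
  have := qf_comb (bl M x y) (- (qf M x + 1)); rewrite qy0 mulr0; nra.
have qy_gt0 : 0 < qf M y by rewrite lt_def qy_neq0 M_ge0.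
have := qf_comb (qf M y) (- bl M x y); nra.
Qed.

Lemma qf_rotation_exp_ge (F : realFieldType) n (A W : 'M[F]_n) (a b : 'cV[F]_n) al be :
  W^T = W -> (forall x, 0 <= qf W x) -> 1 <= al ^+ 2 + be ^+ 2 ->
  A *m a = al *: a - be *: b -> A *m b = be *: a + al *: b ->
  forall k, qf W a + qf W b <= qf W (A ^+ k *m a) + qf W (A ^+ k *m b).
Proof.
move=> W_sym W_ge0 rho_ge1 Aa Ab; elim=> [|k IHk]; first by rewrite expr0 !mul1mx.
rewrite !exprSr -!mulmxA Aa Ab mulmxBr mulmxDr -!scalemxAr qf_rotate //.
by rewrite (le_trans IHk) // ler_peMl // addr_ge0.
Qed.

Section SecondMoment.
Local Open Scope ereal_scope.
Variables (R : realType) (n : nat) (d : measure_display) (T : measurableType d).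
Variables (Pr : probability T R) (v0 : T -> 'cV[R]_n) (Phi : 'M[R]_n).
Hypothesis v0_moment : forall i j : 'I_n,
  Pr.-integrable setT (fun x => (v0 x i 0 * v0 x j 0)%:E) /\
  \int[Pr]_x (v0 x i 0 * v0 x j 0)%:E = (Phi i j)%:E.

Let qf_moment_sum (M : 'M[R]_n) x : (qf M (v0 x))%:E =
  \sum_j \sum_i (M i j)%:E * (v0 x i 0 * v0 x j 0)%:E.
Proof.
rewrite qf_expand -sumEFin; apply: eq_bigr => j _.
by rewrite -sumEFin; apply: eq_bigr => i _; rewrite EFinM.
Qed.

Let moment_termZ_integrable (M : 'M[R]_n) i j :
  Pr.-integrable setT (fun x => (M i j)%:E * (v0 x i 0 * v0 x j 0)%:E).
Proof. exact: integrableZl (v0_moment i j).1. Qed.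

Lemma qf_moment_integrable (M : 'M[R]_n) :
  Pr.-integrable setT (fun x => (qf M (v0 x))%:E).
Proof.
apply: (eq_integrable measurableT _ _ (fun x _ => esym (qf_moment_sum M x))).
by apply: (integrable_sum measurableT) => j _; apply: integrable_sum.
Qed.

Lemma integral_qf_moment (M : 'M[R]_n) :
  \int[Pr]_x (qf M (v0 x))%:E = (mxdot M Phi)%:E.
Proof.
under eq_integral do rewrite qf_moment_sum.
rewrite (integral_sum measurableT); last by move=> j; apply: integrable_sum.
rewrite /mxdot -sumEFin; apply: eq_bigr => j _.
rewrite (integral_sum measurableT) //.
rewrite -sumEFin; apply: eq_bigr => i _.
have [integrable_ij int_ij] := v0_moment i j.
by rewrite (integralZl measurableT integrable_ij) int_ij EFinM.
Qed.

Lemma mxdot_moment_ge0 (M : 'M[R]_n) : (forall x, 0 <= qf M x)%R ->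
  (0 <= mxdot M Phi)%R.
Proof.
by move=> M_ge0; rewrite -lee_fin -integral_qf_moment integral_ge0 // => x _; rewrite lee_fin.
Qed.

(* Apply mxdot_moment_ge0 to the psd matrix qf M x * M - l l^T, l = M x, x = Phi u,
   then Cauchy-Schwarz for Phi on (l, u). *)
Lemma qf_mulmx_moment_le (M : 'M[R]_n) u :
  M^T = M -> (forall x, 0 <= qf M x)%R ->
  Phi^T = Phi -> (forall x, 0 <= qf Phi x)%R ->
  (qf M (Phi *m u) <= mxdot M Phi * qf Phi u)%R.
Proof.
move=> M_sym M_ge0 Phi_sym Phi_ge0; set x := Phi *m u; set l := M *m x.
have bl_l y : ((l^T *m y) 0 0 = bl M x y)%R by rewrite /l /bl trmx_mul M_sym.
have le_l : (qf Phi l <= qf M x * mxdot M Phi)%R.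
  rewrite -subr_ge0 -(mxdot_outer l Phi) -mxdotZl -mxdotBl; apply: mxdot_moment_ge0 => y.
  by rewrite qfBl qfZl qf_outer bl_l subr_ge0 bl_CauchySchwarz.
have bl_lu : bl Phi l u = qf M x.
  by rewrite /qf /bl /l /x trmx_mul M_sym -!mulmxA.
have := bl_CauchySchwarz l u Phi_sym Phi_ge0; rewrite bl_lu => CS.
have [qx0 | qx_neq0] := eqVneq (qf M x) 0%R.
  by rewrite qx0 mulr_ge0 ?mxdot_moment_ge0.
have qx_gt0 : (0 < qf M x)%R by rewrite lt_def qx_neq0 M_ge0.
rewrite -(ler_pM2l qx_gt0) mulrA -expr2 (le_trans CS) // ler_wpM2r //.
Qed.

End SecondMoment.

Section NonnegSeries.
Local Open Scope ereal_scope.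
Variable R : realType.
Implicit Types u : nat -> R.

Lemma abs_summable_nneseries_lt_pinfty u : (forall k, 0 <= u k)%R ->
  abs_summable u -> \sum_(0 <= k <oo) (u k)%:E < +oo.
Proof.
move=> u_ge0 [M sumM]; apply: le_lt_trans (ltry M).
apply: lime_le; first by apply: is_cvg_nneseries => k _ _; rewrite lee_fin.
apply: nearW => N; rewrite sumEFin lee_fin big_mkord (le_trans _ (sumM N)) //.
by apply: ler_sum => k _; exact: ler_norm.
Qed.

Lemma nneseries_lbound_pinfty u eta : (0 < eta)%R -> (forall k, eta <= u k)%R ->
  \sum_(0 <= k <oo) (u k)%:E = +oo.
Proof.
move=> eta_gt0 u_ge_eta; have u_ge0 k : 0 <= (u k)%:E.
  by rewrite lee_fin (le_trans (ltW eta_gt0)).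
have partial_ge N : (N%:R * eta)%:E <= \sum_(0 <= k <oo) (u k)%:E.
  apply: le_trans (nneseries_lim_ge N (fun k _ _ => u_ge0 k)).
  have -> : (N%:R * eta = \sum_(0 <= k < N) eta)%R.
    by rewrite sumr_const_nat subn0 mulr_natl.
  by rewrite sumEFin lee_fin ler_sum.
apply/eqP; rewrite eq_le leey /= leNgt; apply/negP => lt_y.
have sum_fin : \sum_(0 <= k <oo) (u k)%:E \is a fin_num.
  by rewrite ge0_fin_numE // nneseries_ge0.
set S := fine (\sum_(0 <= k <oo) (u k)%:E).
have := partial_ge (Num.truncn (S / eta)).+1; rewrite -(fineK sum_fin) lee_fin.
have := truncnS_gt (S / eta); rewrite ltr_pdivrMr // => lt_S lt_N.
by have := lt_le_trans lt_S lt_N; rewrite ltxx.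
Qed.

End NonnegSeries.

Lemma char_poly_trmx (T : comNzRingType) n (M : 'M[T]_n) :
  char_poly M^T = char_poly M.
Proof.
by rewrite /char_poly -det_tr; congr (\det _); apply/matrixP => i j; rewrite !mxE eq_sym.
Qed.

Lemma root_char_poly_eigenvector (F : fieldType) n (M : 'M[F]_n) z :
  root (char_poly M) z -> exists2 v : 'cV[F]_n, v != 0 & M *m v = z *: v.
Proof.
rewrite -char_poly_trmx -eigenvalue_root_char => /eigenvalueP [w wM w_neq0].
exists w^T; first by rewrite trmx_eq0.
by rewrite -[M]trmxK -trmx_mul wM linearZ.
Qed.

Lemma nilpotent_add_eigenvector_eq0 (F : fieldType) n k (S G : 'M[F]_n)
  (v : 'cV[F]_n) z :
  S ^+ k = 0 -> G *m v = 0 -> (S + G) *m v = z *: v -> z != 0 -> v = 0.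
Proof.
move=> Sk0 Gv0 Sv z_neq0; rewrite mulmxDl Gv0 addr0 in Sv.
have Sjv j : S ^+ j *m v = z ^+ j *: v.
  elim: j => [|j IHj]; first by rewrite !expr0 mul1mx scale1r.
  by rewrite exprSr -mulmxA Sv -scalemxAr IHj scalerA -exprS.
apply/eqP; have /eqP := Sjv k; rewrite Sk0 mul0mx eq_sym scaler_eq0 expf_eq0.
by rewrite (negbTE z_neq0) andbF.
Qed.

Section ComplexParts.
Variable R : realType.
Local Notation toC := (real_complex R).
Local Notation Re_mx := (map_mx (@complex.Re R)).
Local Notation Im_mx := (map_mx (@complex.Im R)).

Lemma Re_mx_mul p n q (M : 'M[R]_(p, n)) (v : 'M[R[i]]_(n, q)) :
  Re_mx (map_mx toC M *m v) = M *m Re_mx v.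
Proof.
apply/matrixP => i j; rewrite !mxE raddf_sum; apply: eq_bigr => k _.
by rewrite !mxE; case: (v k j) => a b /=; rewrite mul0r subr0.
Qed.

Lemma Im_mx_mul p n q (M : 'M[R]_(p, n)) (v : 'M[R[i]]_(n, q)) :
  Im_mx (map_mx toC M *m v) = M *m Im_mx v.
Proof.
apply/matrixP => i j; rewrite !mxE raddf_sum; apply: eq_bigr => k _.
by rewrite !mxE; case: (v k j) => a b /=; rewrite mul0r addr0.
Qed.

Lemma Re_mx_scale p q (z : R[i]) (v : 'M[R[i]]_(p, q)) :
  Re_mx (z *: v) = complex.Re z *: Re_mx v - complex.Im z *: Im_mx v.
Proof. by apply/matrixP => i j; rewrite !mxE; case: z; case: (v i j). Qed.

Lemma Im_mx_scale p q (z : R[i]) (v : 'M[R[i]]_(p, q)) :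
  Im_mx (z *: v) = complex.Im z *: Re_mx v + complex.Re z *: Im_mx v.
Proof. by apply/matrixP => i j; rewrite !mxE; case: z => a b; case: (v i j) => c e /=; rewrite addrC. Qed.

Lemma Re_Im_mx_eq0 p q (v : 'M[R[i]]_(p, q)) : Re_mx v = 0 -> Im_mx v = 0 -> v = 0.
Proof.
move=> /matrixP Re0 /matrixP Im0; apply/matrixP => i j.
by have := Re0 i j; have := Im0 i j; rewrite !mxE; case: (v i j) => a b /= -> ->.
Qed.

Lemma eigenvector_Re_Im n (A : 'M[R]_n) z (v : 'cV[R[i]]_n) : map_mx toC A *m v = z *: v ->
  A *m Re_mx v = complex.Re z *: Re_mx v - complex.Im z *: Im_mx v /\
  A *m Im_mx v = complex.Im z *: Re_mx v + complex.Re z *: Im_mx v.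
Proof. by move=> Av; rewrite -Re_mx_mul -Im_mx_mul Av Re_mx_scale Im_mx_scale. Qed.

(* The Popov-Belevitch-Hautus test: no eigenvector of A for an eigenvalue outside
   the open unit disc is invisible to the weight W; for symmetric W,
   v^* W v = qf W (Re v) + qf W (Im v). *)
Definition detectable n (A W : 'M[R]_n) := forall (z : R[i]) (v : 'cV[R[i]]_n),
  1 <= `|z| -> map_mx toC A *m v = z *: v ->
  qf W (Re_mx v) = 0 -> qf W (Im_mx v) = 0 -> v = 0.

Lemma detectable_nilpotent_add n k (S G W : 'M[R]_n) :
  S ^+ k = 0 -> (forall x, qf W x = 0 -> G *m x = 0) -> detectable (S + G) W.
Proof.
move=> Sk0 W_G z v z_ge1 Av WRe0 WIm0.
have z_neq0 : z != 0 by apply: contraTneq z_ge1 => ->; rewrite normr0 ler10.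
apply: (@nilpotent_add_eigenvector_eq0 _ _ k (map_mx toC S) (map_mx toC G) _ z) => //.
- by rewrite -map_mxX Sk0 map_mx0.
- by apply: Re_Im_mx_eq0; rewrite ?Re_mx_mul ?Im_mx_mul W_G.
- by rewrite -map_mxD.
Qed.

End ComplexParts.

Lemma intertwine_exp (T : pzRingType) n q (A : 'M[T]_n) (B : 'M[T]_q)
  (P : 'M[T]_(n, q)) : A *m P = P *m B -> forall k, A ^+ k *m P = P *m B ^+ k.
Proof.
move=> AP; elim=> [|k IHk]; first by rewrite !expr0 mul1mx mulmx1.
by rewrite !exprSr -mulmxA AP mulmxA IHk -mulmxA.
Qed.

Definition expected_stage_cost (T : comPzRingType) n (A W Phi : 'M[T]_n) k :=
  mxdot ((A ^+ k)^T *m W *m A ^+ k) Phi.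

Section ClosedLoopCost.
Variables (R : realType) (n q : nat) (A W Phi : 'M[R]_n) (P : 'M[R]_(n, q)).
Hypotheses (P_orth : P^T *m P = 1%:M) (AP : A *m P = P *m (P^T *m A *m P)).
Hypotheses (W_sym : W^T = W) (W_ge0 : forall x, 0 <= qf W x) (Phi_sym : Phi^T = Phi).
Local Notation Th := (P^T *m A *m P).
Local Notation cost := (expected_stage_cost A W Phi).

Lemma expected_stage_cost_abs_summable :
  (Phi^T <= P^T)%MS -> schur Th -> abs_summable cost.
Proof.
move=> /submxP [U PhiU] Th_schur.
have Phi_PU : Phi = P *m U^T by rewrite -[LHS]trmxK PhiU trmx_mul trmxK.
have Phi_UP : Phi = U *m P^T by rewrite -Phi_sym.
have PhiP : P^T *m Phi *m P = U^T *m P by rewrite Phi_PU mulmxA P_orth mul1mx.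
have Phi_eq : Phi = P *m (P^T *m Phi *m P) *m P^T.
  by rewrite PhiP mulmxA -Phi_PU {2}Phi_UP -(mulmxA U) P_orth mulmx1 -Phi_UP.
have sum_PTh := mx_abs_summableMl P (schur_mxpow_abs_summable Th_schur).
have := abs_summable_mxdot (P^T *m Phi *m P)
  (mx_abs_summableM (mx_abs_summableMr W (mx_abs_summable_tr sum_PTh)) sum_PTh).
apply: eq_abs_summable => k.
rewrite /expected_stage_cost [in RHS]Phi_eq mxdot_congr -(intertwine_exp AP).
by rewrite !trmx_mul !mulmxA.
Qed.

Variables (d : measure_display) (T : measurableType d) (Pr : probability T R).
Variable v0 : T -> 'cV[R]_n.
Hypothesis v0_moment : forall i j : 'I_n,
  Pr.-integrable setT (fun x => (v0 x i 0 * v0 x j 0)%:E) /\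
  (\int[Pr]_x (v0 x i 0 * v0 x j 0)%:E = (Phi i j)%:E)%E.
Hypothesis Phi_ge0 : forall x, 0 <= qf Phi x.

Lemma expected_stage_cost_ge0 k : 0 <= cost k.
Proof. by apply: (mxdot_moment_ge0 v0_moment) => x; rewrite qf_mulmx. Qed.

Lemma expected_cost_finite_of_schur :
  (Phi^T <= P^T)%MS -> schur Th -> (\sum_(0 <= k <oo) (cost k)%:E < +oo)%E.
Proof.
move=> PhiP Th_schur; apply: abs_summable_nneseries_lt_pinfty.
  exact: expected_stage_cost_ge0.
exact: expected_stage_cost_abs_summable.
Qed.

Lemma qf_exp_moment_le k u : qf W (A ^+ k *m (Phi *m u)) <= cost k * qf Phi u.
Proof.
rewrite -qf_mulmx; apply: (qf_mulmx_moment_le v0_moment) => // [|x].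
  by rewrite !trmx_mul trmxK W_sym mulmxA.
by rewrite qf_mulmx.
Qed.

Lemma expected_stage_cost_lbound (z : R[i]) :
  (P^T <= Phi^T)%MS -> detectable A W ->
  root (char_poly (map_mx (real_complex R) Th)) z -> 1 <= `|z| ->
  exists2 eta, 0 < eta & forall k, eta <= cost k.
Proof.
move=> PPhi A_det Th_z z_ge1.
have [w w_neq0 Th_w] := root_char_poly_eigenvector Th_z.
set v := map_mx (real_complex R) P *m w.
have Av : map_mx (real_complex R) A *m v = z *: v.
  by rewrite /v mulmxA -map_mxM AP map_mxM -mulmxA Th_w scalemxAr.
have v_neq0 : v != 0.
  apply: contraNneq w_neq0 => v_eq0.
  have <- : (map_mx (real_complex R) P)^T *m v = w.
    by rewrite /v mulmxA map_trmx -map_mxM P_orth map_mx1 mul1mx.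
  by rewrite v_eq0 mulmx0.
have [Aa Ab] := eigenvector_Re_Im Av.
set a := map_mx (@complex.Re R) v in Aa Ab *; set b := map_mx (@complex.Im R) v in Aa Ab *.
have in_Phi y : exists u, P *m y = Phi *m u.
  have /submxP [U eqU] : ((P *m y)^T <= Phi^T)%MS.
    by rewrite trmx_mul (submx_trans (submxMl _ _)).
  by exists U^T; rewrite -[LHS]trmxK eqU trmx_mul trmxK.
have [ua a_eq] : exists u, a = Phi *m u by rewrite /a Re_mx_mul.
have [ub b_eq] : exists u, b = Phi *m u by rewrite /b Im_mx_mul.
set gamma := qf W a + qf W b.
have gamma_gt0 : 0 < gamma.
  rewrite lt_def addr_ge0 // andbT /gamma paddr_eq0 //.
  by apply: contra v_neq0 => /andP[/eqP Wa0 /eqP Wb0]; rewrite (A_det z v).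
have rho_ge1 : 1 <= complex.Re z ^+ 2 + complex.Im z ^+ 2.
  by rewrite -(@lecR R) add_Re2_Im2 exprn_ege1.
have growth := qf_rotation_exp_ge W_sym W_ge0 rho_ge1 Aa Ab.
set phi := qf Phi ua + qf Phi ub.
have bound k : gamma <= cost k * phi.
  by rewrite (le_trans (growth k)) // mulrDr a_eq b_eq lerD ?qf_exp_moment_le.
have phi_gt0 : 0 < phi.
  rewrite lt_def addr_ge0 // andbT; apply: contraTneq (bound 0%N) => ->.
  by rewrite mulr0 -ltNge.
by exists (gamma / phi) => [|k]; rewrite ?divr_gt0 // ler_pdivrMr.
Qed.

Lemma schur_of_expected_cost_finite : (P^T <= Phi^T)%MS -> detectable A W ->
  (\sum_(0 <= k <oo) (cost k)%:E < +oo)%E -> schur Th.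
Proof.
move=> PPhi A_det cost_fin z Th_z; rewrite real_ltNge ?normr_real ?real1 //.
apply/negP => z_ge1.
have [eta eta_gt0 eta_le] := expected_stage_cost_lbound PPhi A_det Th_z z_ge1.
by move: cost_fin; rewrite (nneseries_lbound_pinfty eta_gt0 eta_le).
Qed.

End ClosedLoopCost.

Lemma pd_qf_ge0 (R : realType) n (M : 'M[R]_n) : pd M -> forall x, 0 <= qf M x.
Proof.
move=> M_pd x; have [->|/M_pd.2/ltW //] := eqVneq x 0.
by rewrite /qf /bl mulmx0 mxE.
Qed.

Lemma pd_qf_eq0 (R : realType) n (M : 'M[R]_n) x : pd M -> qf M x = 0 -> x = 0.
Proof. by move=> M_pd; rewrite /qf /bl => qx0; apply/eqP/negPn/negP => /M_pd.2; rewrite qx0 ltxx. Qed.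

Definition stage_weight (R : realType) n m r L (A : 'M[R]_n) (B : 'M[R]_(n, m))
  (C : 'M[R]_(r, n)) (Q : 'M[R]_r) (Rw : 'M[R]_m) (K : 'M[R]_(m, L * m + L * r)) :=
  (C *m Gamma L A B C)^T *m Q *m (C *m Gamma L A B C) + K^T *m Rw *m K.

Section IOHClosedLoop.
Variables (R : realType) (n m r L : nat).
Variables (A : 'M[R]_n) (B : 'M[R]_(n, m)) (C : 'M[R]_(r, n)).
Variables (Q : 'M[R]_r) (Rw : 'M[R]_m) (K : 'M[R]_(m, L * m + L * r)).
Hypotheses (Q_pd : pd Q) (Rw_pd : pd Rw).
Local Notation W := (stage_weight A B C Q Rw K).
Local Notation Y := (C *m Gamma L A B C).

Lemma qf_stage_weight v : qf W v = qf Q (Y *m v) + qf Rw (K *m v).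
Proof. by rewrite qfDl !qf_mulmx. Qed.

Lemma stage_weight_sym : W^T = W.
Proof. by rewrite /stage_weight raddfD /= !trmx_mul !trmxK Q_pd.1 Rw_pd.1 !mulmxA. Qed.

Lemma stage_weight_ge0 v : 0 <= qf W v.
Proof. by rewrite qf_stage_weight addr_ge0 ?pd_qf_ge0. Qed.

Lemma Jcost_expected_stage_cost d (T : measurableType d) (Pr : probability T R)
    (v0 : T -> 'cV[R]_(L * m + L * r)) (Phi : 'M[R]_(L * m + L * r)) :
  (forall i j, Pr.-integrable setT (fun x => (v0 x i 0 * v0 x j 0)%:E) /\
     (\int[Pr]_x (v0 x i 0 * v0 x j 0)%:E = (Phi i j)%:E)%E) ->
  Jcost Pr v0 A B C Q Rw K =
  (\sum_(0 <= k <oo) (expected_stage_cost (Acl A B C K) W Phi k)%:E)%E.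
Proof.
move=> v0_moment.
have cost_k k x : stage_cost A B C Q Rw K (Acl A B C K ^+ k *m v0 x) =
    qf ((Acl A B C K ^+ k)^T *m W *m Acl A B C K ^+ k) (v0 x).
  by rewrite qf_mulmx qf_stage_weight /stage_cost /qf /bl /= [LHS]mxE.
rewrite /Jcost integral_nneseries //.
- apply: eq_eseriesr => k _; under eq_integral do rewrite cost_k.
  exact: integral_qf_moment.
- move=> k; apply: (measurable_int Pr).
  apply: eq_integrable (qf_moment_integrable v0_moment _) => // x _.
  by rewrite cost_k.
- by move=> k x _; rewrite lee_fin cost_k qf_mulmx stage_weight_ge0.
Qed.

Lemma Acl_detectable : detectable (Acl A B C K) W.
Proof.
rewrite /Acl /Theta -addrA.
apply: (detectable_nilpotent_add (k := L * m + L * r)).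
  exact/strictly_upper_nilpotent/strictly_upper_block_diag/strictly_upper_Sk/strictly_upper_Sk.
move=> x /eqP; rewrite qf_stage_weight paddr_eq0 ?pd_qf_ge0 //.
move=> /andP[/eqP /(pd_qf_eq0 Q_pd) Yx /eqP /(pd_qf_eq0 Rw_pd) Kx].
by rewrite mulmxDl -(mulmxA (Emx _ _ _ _)) -mulmxA Yx -mulmxA Kx !mulmx0 addr0.
Qed.

End IOHClosedLoop.

Lemma Acl_ioh_invariant (R : realType) n m r L (A : 'M[R]_n) (B : 'M[R]_(n, m))
    (C : 'M[R]_(r, n)) (K : 'M[R]_(m, L * m + L * r)) (P : 'M[R]_(L * m + L * r, L * m + n)) :
  same_image P (ctrb_ioh L A B C) -> P^T *m P = 1%:M ->
  Acl A B C K *m P = P *m (P^T *m Acl A B C K *m P).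
Proof.
move=> /(ctrb_feedback_invariant K) [D AclP] P_orth.
by rewrite /Acl -mulmxA AclP (mulmxA P^T) P_orth mul1mx.
Qed.

Theorem lemma6 (R : realType) (n m r L : nat)
  (A : 'M[R]_n) (B : 'M[R]_(n, m)) (C : 'M[R]_(r, n))
  (hmin : minimal A B C) (hA : schur A)
  (hL : \rank (OL L A C) = n)
  (P : 'M[R]_(L * m + L * r, L * m + n))
  (hPim : same_image P (ctrb_ioh L A B C))
  (hPorth : P^T *m P = 1%:M)
  (Phi : 'M[R]_(L * m + L * r)) (hPhi : psd Phi)
  (hPhiim : same_image Phi (ctrb_ioh L A B C))
  (Q : 'M[R]_r) (Rw : 'M[R]_m) (hQ : pd Q) (hR : pd Rw)
  (d : measure_display) (T : measurableType d) (Pr : probability T R)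
  (v0 : T -> 'cV[R]_(L * m + L * r))
  (hv0 : gaussian_second_moment Pr v0 Phi)
  (K : 'M[R]_(m, L * m + L * r)) :
  schur (P^T *m (Theta L A B C + Pimx R m r L *m K) *m P) <->
  (Jcost Pr v0 A B C Q Rw K < +oo)%E.
Proof.
(* Only the second moments of v(L) matter. *)
have [_ _ v0_moment] := hv0.
have [Phi_sym Phi_ge0] := hPhi.
have [PX XP] := andP hPim; have [PhiX XPhi] := andP hPhiim.
have AclP := Acl_ioh_invariant K hPim hPorth.
have W_sym := stage_weight_sym A B C K hQ hR.
have W_ge0 := stage_weight_ge0 A B C K hQ hR.
rewrite (Jcost_expected_stage_cost A B C K hQ hR v0_moment); split.
  exact: (expected_cost_finite_of_schur hPorth AclP W_ge0 Phi_sym v0_moment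
    (submx_trans PhiX XP)).
exact: (schur_of_expected_cost_finite hPorth AclP W_sym W_ge0 Phi_sym v0_moment Phi_ge0
  (submx_trans PX XPhi) (Acl_detectable hQ hR)).
Qed.
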